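(* Let $\Omega$ be a domain partitioned as $\Omega=\bigcup_{k=1}^K\Omega_k$, let $X$, $Y$, $Z$ be spaces as described in the context, with linear operators $A: X\to Y$ and $B:X\to Z$, data $f\in Y$, $g\in Z$, and a weight $\tau\ge 0$. Suppose the boundary value problem $Au=f$ in $\Omega$, $Bu=g$ on $\partial\Omega$ has a solution $u^*$ with an approximating sequence $\{u_n^*\}_{n\ge1}\subset X$ (in the sense of the context). For each $k=1,\dots,K$ let $G_k$ be a compact subset of $Y|_{\Omega_k}$ containing $\{(Au_n^*-f)|_{\Omega_k}\}_{n\ge 1}$, and set $$\tilde V_K=\{v\in X:\ (Av-f)|_{\Omega_k}\in G_k\ \text{for all } k=1,\dots,K\}.$$ Then for every $\epsilon>0$ there exist integers $N_{\epsilon,1},\dots,N_{\epsilon,K}$ such that, with $\mathbf N_{\epsilon,K}=(N_{\epsilon,1},\dots,N_{\epsilon,K})$, $$\mathcal J_\tau^{h,\mathbf N_{\epsilon,K}}(v)\ \ge\ \mathcal J_\tau(v)-\epsilon\qquad\text{for all } v\in\tilde V_K .$$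
   Context: Setting: $X$ is a space of functions on $\Omega$; $Y$ is a Hilbert space of functions on $\Omega$ and, for each subdomain $\Omega_k$, $Y|_{\Omega_k}$ denotes the Hilbert space with the same structure as $Y$ but over $\Omega_k$, such that $\|w\|_Y^2=\sum_{k=1}^K\|w|_{\Omega_k}\|_{Y|_{\Omega_k}}^2$ (e.g. $Y=L^2(\Omega)$, $Y|_{\Omega_k}=L^2(\Omega_k)$); $Z$ is a normed space of functions on $\partial\Omega$. For each $k$, $\{\Phi_{k,i}\}_{i\ge1}$ is a complete orthonormal basis of $Y|_{\Omega_k}$, and $(w,\Phi_{k,i})_Y$ denotes the inner product in $Y|_{\Omega_k}$ of $w|_{\Omega_k}$ with $\Phi_{k,i}$. The loss functionals are $$\mathcal J_\tau(v)=\|f-Av\|_Y^2+\tau\|Bv-g\|_Z^2,\qquad \mathcal J_\tau^{h,\mathbf N}(v)=\sum_{k=1}^K\sum_{i=1}^{N_k}(f-Av,\Phi_{k,i})_Y^2+\tau\|Bv-g\|_Z^2,$$ for $\mathbf N=(N_1,\dots,N_K)$. Solution concept: $u^*$ (in a space $V$) is a solution of $Au=f$, $Bu=g$ if there is a sequence $\{u_n^*\}\subset X$ with $\|u_n^*-u^*\|_V\to0$ and $\|Au_n^*-f\|_Y+\|Bu_n^*-g\|_Z\to 0$; such a sequence is called an approximating sequence of $u^*$. *)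

From HB Require Import structures.
From mathcomp Require Import all_boot all_order all_algebra.
From mathcomp Require Import all_classical all_reals all_analysis.
Set Implicit Arguments. Unset Strict Implicit. Unset Printing Implicit Defensive.
Import Order.TTheory GRing.Theory Num.Theory.
Import numFieldNormedType.Exports.
Local Open Scope classical_set_scope.
Local Open Scope ring_scope.

Definition is_inner_product (R : realType) (V : normedModType R)
  (ip : V -> V -> R) : Prop :=
  (forall x y, ip x y = ip y x) /\
  (forall (a : R) (x y z : V), ip (a *: x + y) z = a * ip x z + ip y z) /\
  (forall x, ip x x = `|x| ^+ 2).

Definition is_hilbert (R : realType) (V : completeNormedModType R)
  (ip : V -> V -> R) : Prop := is_inner_product ip.

Definition complete_orthonormal_basis (R : realType) (V : normedModType R)
  (ip : V -> V -> R) (Phi : nat -> V) : Prop :=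
  (forall i j, ip (Phi i) (Phi j) = if i == j then 1 else 0) /\
  (forall x, (forall i, ip x (Phi i) = 0) -> x = 0).

Definition J_tau (R : realType) (X : lmodType R) (Y Z : normedModType R)
  (A : X -> Y) (B : X -> Z) (f : Y) (g : Z) (tau : R) (v : X) : R :=
  `|f - A v| ^+ 2 + tau * `|B v - g| ^+ 2.

(* The truncated loss
   J_tau^{h,N}(v) = sum_k sum_{i < N_k} (f - A v, Phi_{k,i})_Y^2 + tau ||B v - g||_Z^2,
   where (w, Phi_{k,i})_Y = ip_k (w|_{Omega_k}) (Phi_{k,i}). *)
Definition J_tau_hN (R : realType) (X : lmodType R) (Y Z : normedModType R)
  (K : nat) (Yk : 'I_K -> normedModType R) (res : forall k, Y -> Yk k)
  (ip : forall k, Yk k -> Yk k -> R) (Phi : forall k, nat -> Yk k)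
  (A : X -> Y) (B : X -> Z) (f : Y) (g : Z) (tau : R)
  (N : 'I_K -> nat) (v : X) : R :=
  \sum_(k < K) \sum_(i < N k) (ip k (res k (f - A v)) (Phi k i)) ^+ 2
  + tau * `|B v - g| ^+ 2.

From HB Require Import structures.
From mathcomp Require Import all_boot all_order all_algebra.
From mathcomp Require Import all_classical all_reals all_analysis.
From mathcomp Require Import lra.

Set Implicit Arguments.
Unset Strict Implicit.
Unset Printing Implicit Defensive.
Import Order.TTheory GRing.Theory Num.Theory.
Import numFieldNormedType.Exports.
Local Open Scope classical_set_scope.
Local Open Scope ring_scope.

(* The truncated loss differs from the full loss only through the Bessel
   defects [||w_k||^2 - sum_(i < N_k) (w_k, Phi_(k,i))^2] of the local
   residuals [w_k = (f - A v)|_(Omega_k)].  By Parseval each defect tends to 0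
   as [N_k] grows, and since the defect is the square of the norm of
   [w_k - P_N w_k], a 1-Lipschitz function of [w_k], the convergence is uniform
   on the compact set [G_k].  Choosing [N_k] that makes every defect at most
   [eps / (K + 1)] gives the claim. *)

Section InnerProduct.
Variables (R : realType) (H : normedModType R) (ip : H -> H -> R).
Hypothesis ip_inner : is_inner_product ip.

Lemma ipC x y : ip x y = ip y x.
Proof. by case: ip_inner. Qed.

Lemma ip_norm x : ip x x = `|x| ^+ 2.
Proof. by case: ip_inner => _ []. Qed.

Let ipL : forall a x y z, ip (a *: x + y) z = a * ip x z + ip y z.
Proof. by case: ip_inner => _ []. Qed.

Lemma ip0l z : ip 0 z = 0.
Proof.
have := ipL 1 0 0 z; rewrite scaler0 addr0 mul1r => ip0.
by apply: (addrI (ip 0 z)); rewrite addr0 -ip0.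
Qed.

Lemma ipZl a x z : ip (a *: x) z = a * ip x z.
Proof. by rewrite -[a *: x]addr0 ipL ip0l addr0. Qed.

Lemma ipDl x y z : ip (x + y) z = ip x z + ip y z.
Proof. by rewrite -[x]scale1r ipL mul1r scale1r. Qed.

Lemma ipNl x z : ip (- x) z = - ip x z.
Proof. by rewrite -scaleN1r ipZl mulN1r. Qed.

Lemma ipBl x y z : ip (x - y) z = ip x z - ip y z.
Proof. by rewrite ipDl ipNl. Qed.

Lemma ip_suml N (F : 'I_N -> H) z :
  ip (\sum_(i < N) F i) z = \sum_(i < N) ip (F i) z.
Proof.
elim: N F => [|N IH] F; first by rewrite !big_ord0 ip0l.
by rewrite !big_ord_recr /= ipDl IH.
Qed.

Lemma norm_pythagoras x y :
  ip x y = 0 -> `|x + y| ^+ 2 = `|x| ^+ 2 + `|y| ^+ 2.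
Proof.
move=> xy; rewrite -!ip_norm !ipDl !(ipC _ (x + y)) !ipDl (ipC y x) xy.
by rewrite addr0 add0r.
Qed.

Section Orthonormal.
Variable Phi : nat -> H.
Hypothesis Phi_orthonormal :
  forall i j, ip (Phi i) (Phi j) = if i == j then 1 else 0.

Definition coef w i := ip w (Phi i).
Definition proj N w := \sum_(i < N) coef w i *: Phi i.
Definition bessel N w := \sum_(i < N) coef w i ^+ 2.

Lemma coefB x y j : coef (x - y) j = coef x j - coef y j.
Proof. exact: ipBl. Qed.

Lemma coef_proj N w j : coef (proj N w) j = if (j < N)%N then coef w j else 0.
Proof.
rewrite /coef /proj ip_suml.
under eq_bigr do rewrite ipZl Phi_orthonormal.
case: ifP => [jN|jNn].
  rewrite (bigD1 (Ordinal jN)) //= eqxx mulr1 big1 ?addr0 // => i ij.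
  by case: eqP => [eij|]; rewrite ?mulr0 //; case/eqP: ij; apply: val_inj.
rewrite big1 // => i _; case: eqP => [eij|]; rewrite ?mulr0 //.
by move: (ltn_ord i); rewrite eij jNn.
Qed.

Lemma coef_sub_proj N w j : (j < N)%N -> coef (w - proj N w) j = 0.
Proof. by move=> jN; rewrite coefB coef_proj jN subrr. Qed.

Lemma proj_proj N M w : (N <= M)%N -> proj N (proj M w) = proj N w.
Proof.
move=> NM; apply: eq_bigr => i _.
by rewrite coef_proj (leq_trans (ltn_ord i) NM).
Qed.

Lemma projB N x y : proj N (x - y) = proj N x - proj N y.
Proof.
by rewrite /proj -sumrB; apply: eq_bigr => i _; rewrite coefB scalerBl.
Qed.

Lemma sub_projB N x y :
  (x - y) - proj N (x - y) = (x - proj N x) - (y - proj N y).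
Proof.
by rewrite projB !opprB addrACA [RHS]addrACA (addrC (- y)).
Qed.

Lemma ip_proj x N w : ip x (proj N w) = \sum_(i < N) coef w i * coef x i.
Proof. by rewrite ipC ip_suml; apply: eq_bigr => i _; rewrite ipZl ipC. Qed.

Lemma norm_proj N w : `|proj N w| ^+ 2 = bessel N w.
Proof.
by rewrite -ip_norm ip_proj; apply: eq_bigr => i _; rewrite coef_proj ltn_ord.
Qed.

Lemma norm_sub_proj N w : `|w - proj N w| ^+ 2 = `|w| ^+ 2 - bessel N w.
Proof.
have orth : ip (w - proj N w) (proj N w) = 0.
  by rewrite ip_proj big1 // => i _; rewrite coef_sub_proj ?mulr0.
have := norm_pythagoras orth; rewrite subrK norm_proj; lra.
Qed.

Lemma bessel_ge0 N w : 0 <= bessel N w.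
Proof. by apply: sumr_ge0 => i _; rewrite sqr_ge0. Qed.

Lemma bessel_le N w : bessel N w <= `|w| ^+ 2.
Proof. by rewrite -subr_ge0 -norm_sub_proj sqr_ge0. Qed.

Lemma besselS N w : bessel N.+1 w = bessel N w + coef w N ^+ 2.
Proof. by rewrite /bessel big_ord_recr. Qed.

Lemma besselN N w : bessel N (- w) = bessel N w.
Proof. by apply: eq_bigr => i _; rewrite /coef ipNl sqrrN. Qed.

Lemma norm_coef_le w j : `|coef w j| <= `|w|.
Proof.
rewrite -ler_sqr ?nnegrE // real_normK ?num_real //.
by rewrite (le_trans _ (bessel_le j.+1 w)) // besselS lerDr bessel_ge0.
Qed.

Lemma norm_sub_proj_le N w : `|w - proj N w| <= `|w|.
Proof.
by rewrite -ler_sqr ?nnegrE // norm_sub_proj gerBl bessel_ge0.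
Qed.

Lemma norm_proj_sub_proj N M w : (N <= M)%N ->
  `|proj M w - proj N w| ^+ 2 = bessel M w - bessel N w.
Proof.
move=> NM; rewrite -(proj_proj w NM) norm_sub_proj norm_proj.
congr (_ - _); apply: eq_bigr => i _.
by rewrite coef_proj (leq_trans (ltn_ord i) NM).
Qed.

End Orthonormal.
End InnerProduct.

Section Parseval.
Variables (R : realType) (H : completeNormedModType R) (ip : H -> H -> R).
Variable Phi : nat -> H.
Hypothesis ip_inner : is_inner_product ip.
Hypothesis Phi_basis : complete_orthonormal_basis ip Phi.

Let Phi_orthonormal := Phi_basis.1.

(* The Bessel sums increase to their supremum, so the partial sums are
   Cauchy. *)
Lemma proj_cvg w : cvgn (fun N => proj ip Phi N w).
Proof.
apply: cauchy_cvg; apply: cauchy_exP => d d0.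
pose S := range (bessel ip Phi ^~ w).
have supS : has_sup S.
  split; first by exists (bessel ip Phi 0 w), 0%N.
  by exists (`|w| ^+ 2) => _ [N _ <-]; exact: bessel_le.
have [_ [N0 _ <-] N0sup] := sup_adherent (exprn_gt0 2 d0) supS.
exists (proj ip Phi N0 w), N0 => // M /= N0M.
rewrite -ball_normE /= distrC -ltr_sqr ?nnegrE ?(ltW d0) //.
rewrite norm_proj_sub_proj //.
have : bessel ip Phi M w <= sup S by apply: sup_upper_bound => //; exists M.
lra.
Qed.

Lemma proj_cvg_to w : proj ip Phi N w @[N --> \oo] --> w.
Proof.
have cvP := @proj_cvg w; set y := limn _ in cvP.
suff yw : y = w by rewrite yw in cvP.
(* [w - y] is orthogonal to every [Phi j], since [w - y] is the limit of the
   tails [w - proj N w] and these are eventually orthogonal to [Phi j]. *)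
apply/eqP; rewrite eq_sym -subr_eq0; apply/eqP/Phi_basis.2 => j.
apply/eqP; rewrite -normr_le0; apply/ler_addgt0Pr => d d0; rewrite add0r.
have near_y := (cvgrPdistC_lt _ _).1 cvP d d0.
near \oo => N.
have -> : w - y = (w - proj ip Phi N w) + (proj ip Phi N w - y).
  by rewrite addrA subrK.
rewrite ipDl // -/(coef ip Phi _ _) coef_sub_proj //; last first.
  by near: N; exact: nbhs_infty_gt.
rewrite add0r (le_trans (norm_coef_le ip_inner Phi_orthonormal _ _)) // ltW //.
by near: N; exact: near_y.
Unshelve. all: by end_near.
Qed.

(* A near-covering of [G]: where the tail is below [d / 2] at [x] and [N], it
   stays below [d] on [ball x (d / 2)], the tail map being 1-Lipschitz. *)
Lemma tail_unif_compact (G : set H) : compact G -> forall d, 0 < d ->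
  exists N, forall w, G w -> `|w - proj ip Phi N w| < d.
Proof.
move=> cG d d0; have d20 : 0 < d / 2 by rewrite divr_gt0.
have [|N _ hN] := (compact_near_coveringP G).1 cG nat \oo
                    (fun N w => `|w - proj ip Phi N w| < d).
  move=> x Gx.
  exists (ball x (d / 2), [set N | `|x - proj ip Phi N x| < d / 2]).
    split; first exact: nbhsx_ballx.
    exact: (cvgrPdist_lt _ _).1 (@proj_cvg_to x) _ d20.
  move=> [x' N] [/= xx' xN].
  rewrite -ball_normE /= distrC in xx'.
  have -> : x' - proj ip Phi N x' = (x' - x) - proj ip Phi N (x' - x)
                                  + (x - proj ip Phi N x).
    by rewrite sub_projB // subrK.
  rewrite (le_lt_trans (ler_normD _ _)) //.
  have := norm_sub_proj_le ip_inner Phi_orthonormal N (x' - x); lra.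
by exists N => w Gw; exact: hN N (leqnn N) w Gw.
Qed.

Lemma bessel_unif_compact (G : set H) : compact G -> forall e, 0 < e ->
  exists N, forall w, G w -> `|w| ^+ 2 - bessel ip Phi N w <= e.
Proof.
move=> cG e e0; pose d := Num.min 1 e.
have d0 : 0 < d by rewrite lt_min e0 ltr01.
have d1 : d <= 1 by rewrite ge_min lexx.
have de : d <= e by rewrite ge_min lexx orbT.
have [N tailN] := tail_unif_compact cG d0.
exists N => w Gw; rewrite -norm_sub_proj //.
have := tailN w Gw; have := normr_ge0 (w - proj ip Phi N w); nra.
Qed.

End Parseval.

Theorem mainTheorem1 (R : realType)
  (X : lmodType R) (Y Z V : normedModType R)
  (K : nat) (Yk : 'I_K -> completeNormedModType R)
  (res : forall k, {linear Y -> Yk k})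
  (ip : forall k, Yk k -> Yk k -> R)
  (Phi : forall k, nat -> Yk k)
  (hHilb : forall k, is_hilbert (ip k))
  (hBasis : forall k, complete_orthonormal_basis (ip k) (Phi k))
  (hYnorm : forall w : Y, `|w| ^+ 2 = \sum_(k < K) `|res k w| ^+ 2)
  (A : {linear X -> Y}) (B : {linear X -> Z})
  (f : Y) (g : Z) (tau : R) (htau : 0 <= tau)
  (iota : X -> V) (ustar : V) (u : nat -> X)
  (hconvV : (fun n => `|iota (u n) - ustar|) @ \oo --> (0 : R))
  (hres : (fun n => `|A (u n) - f| + `|B (u n) - g|) @ \oo --> (0 : R))
  (G : forall k, set (Yk k))
  (hGc : forall k, compact (G k))
  (hGu : forall k n, G k (res k (A (u n) - f))) :
  forall eps : R, 0 < eps ->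
  exists N : 'I_K -> nat,
    forall v : X, (forall k, G k (res k (A v - f))) ->
      J_tau_hN res ip Phi A B f g tau N v >= J_tau A B f g tau v - eps.
Proof.
move=> eps eps0; set e := eps / K.+1%:R.
have e0 : 0 < e by rewrite divr_gt0 // ltr0n.
have eK : e *+ K <= eps.
  rewrite -mulr_natr -[leRHS](@divfK _ K.+1%:R) ?pnatr_eq0 //.
  by rewrite ler_wpM2l ?ler_nat // ltW.
have /choice [N hN] : forall k, exists N, forall w, G k w ->
    `|w| ^+ 2 - bessel (ip k) (Phi k) N w <= e.
  by move=> k; exact: (bessel_unif_compact (hHilb k) (hBasis k) (hGc k) e0).
exists N => v Gv.
have defect : \sum_(k < K) `|res k (f - A v)| ^+ 2
    - \sum_(k < K) bessel (ip k) (Phi k) (N k) (res k (f - A v)) <= e *+ K.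
  rewrite -sumrB -[K in _ *+ K]card_ord -sumr_const; apply: ler_sum => k _.
  by rewrite -[f - A v]opprB raddfN normrN (besselN (hHilb k)); exact: hN.
rewrite /J_tau_hN /J_tau hYnorm /= addrAC lerD2r lerBlDr -lerBlDl.
exact: le_trans defect eK.
Qed.
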